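(* Let $p\equiv7\pmod{12}$, $m$ odd, $\Theta\in\mathrm{Aut}(R_k)$ with order dividing $p^s$, $\xi$ a generator of $\mathbb{F}_p^*$ and $\alpha=\xi^{(p-1)/6}$. Then $x^2+1$, $x^2-\alpha$, $x^2-\alpha^{-1}$ are irreducible over $R_k$ and $x^{6p^s}+1=(x^2+1)^{p^s}(x^2-\alpha)^{p^s}(x^2-\alpha^{-1})^{p^s}$. Every skew $\Theta$-negacyclic code $\mathcal C$ of length $6p^s$ over $R_k$ decomposes as $\mathcal C=\mathcal C_1\oplus\mathcal C_2\oplus\mathcal C_3$ with $\mathcal C_1,\mathcal C_2,\mathcal C_3$ left ideals of $R_k[x;\Theta]/\langle(x^2+1)^{p^s}\rangle$, $R_k[x;\Theta]/\langle(x^2-\alpha)^{p^s}\rangle$, $R_k[x;\Theta]/\langle(x^2-\alpha^{-1})^{p^s}\rangle$; $\mathcal C^\perp=\mathcal C_1^\perp\oplus\mathcal C_2^\perp\oplus\mathcal C_3^\perp$ with $\mathcal C_1^\perp,\mathcal C_2^\perp,\mathcal C_3^\perp$ left ideals of $R_k[x;\Theta]/\langle(x^2+1)^{p^s}\rangle$, $R_k[x;\Theta]/\langle(x^2-\alpha^{-1})^{p^s}\rangle$, $R_k[x;\Theta]/\langle(x^2-\alpha)^{p^s}\rangle$; and $\mathcal C$ is self-dual iff $\mathcal C_1=\mathcal C_1^\perp$, $\mathcal C_2=\mathcal C_3^\perp$, $\mathcal C_3=\mathcal C_2^\perp$.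
   Context: $R_k=\mathbb{F}_{p^m}[u]/\langle u^k\rangle$; $R_k[x;\Theta]$ is the skew polynomial ring with $xa=\Theta(a)x$. A skew $\Theta$-negacyclic code of length $N$ is a left ideal of $R_k[x;\Theta]/\langle x^N+1\rangle$; decompositions are via the Chinese Remainder isomorphism for the stated factorization. $\mathcal C^\perp$ is the Euclidean dual and $\mathcal C_i^\perp$ its component in the indicated factor ring. *)

From HB Require Import structures.
From mathcomp Require Import all_boot all_order all_algebra.
Set Implicit Arguments. Unset Strict Implicit. Unset Printing Implicit Defensive.
Import GRing.Theory.
Local Open Scope ring_scope.

(* R_k = F[u]/<u^k>, realised as MathComp's quotient ring {poly %/ 'X^k}
   (for k >= 1, 'X^k is monic of size > 1, so this is exactly F[u]/<u^k>). *)
Notation Rk F k := {poly %/ ('X^k : {poly F})}.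

Section Skew.
Variables (R : comNzRingType) (th : R -> R).

(* Multiplication of the skew polynomial ring R[x;th] (x a = th(a) x), on the
   coefficient representation {poly R}:
   (sum a_i x^i)(sum b_j x^j) = sum_{i,j} a_i th^i(b_j) x^(i+j). *)
Definition skew_mul (a b : {poly R}) : {poly R} :=
  \poly_(i < (size a + size b)%N)
     \sum_(j < i.+1) a`_j * iter j th (b`_(i - j)).

Definition skew_exp (a : {poly R}) (n : nat) : {poly R} := iter n (skew_mul a) 1.

Definition left_ideal (I : {poly R} -> Prop) : Prop :=
  [/\ I 0, (forall a b, I a -> I b -> I (a + b)) &
      (forall r a, I a -> I (skew_mul r a))].

(* A left ideal of R[x;th]/<f> (f central), represented by its preimage in
   R[x;th], i.e. a left ideal of R[x;th] containing R[x;th] f. *)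
Definition left_ideal_quot (f : {poly R}) (I : {poly R} -> Prop) : Prop :=
  left_ideal I /\ (forall r, I (skew_mul r f)).

Definition skew_negacyclic_code (N : nat) (C : {poly R} -> Prop) : Prop :=
  left_ideal_quot ('X^N + 1) C.

(* The component of C in the factor ring R[x;th]/<f> under the Chinese
   remainder isomorphism: the image of C modulo f (preimage representation). *)
Definition qcomp (f : {poly R}) (C : {poly R} -> Prop) : {poly R} -> Prop :=
  fun a => exists c r, C c /\ a = c + skew_mul r f.

End Skew.

Section Dual.
Variable R : comNzRingType.

(* coefficient vector in R^N of the class of c modulo x^N + 1 *)
Definition negafold (N : nat) (c : {poly R}) (i : 'I_N) : R :=
  \sum_(t < size c) (-1) ^+ t * c`_(i + t * N).

Definition euclid_dual (N : nat) (C : {poly R} -> Prop) : {poly R} -> Prop :=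
  fun b => forall c, C c -> \sum_(i < N) negafold c i * negafold b i = 0.

Definition same_set (A B : {poly R} -> Prop) : Prop := forall a, A a <-> B a.

(* irreducibility in the (commutative) polynomial ring R[x] *)
Definition poly_unit (a : {poly R}) : Prop := exists b, a * b = 1.
Definition poly_irreducible (q : {poly R}) : Prop :=
  [/\ q != 0, ~ poly_unit q &
      forall a b, q = a * b -> poly_unit a \/ poly_unit b].

End Dual.

Definition Fp_to (p : nat) (R : nzRingType) (a : 'F_p) : R := (nat_of_ord a)%:R.
Arguments Fp_to {p R} a.

(* Since p = 7 (mod 12), alpha is a primitive sixth root of unity in F_p, so
   x^6 + 1 = (x^2 + 1)(x^2 - alpha)(x^2 - alpha^-1), and raising to the power p^s
   in characteristic p factors x^(6p^s) + 1 into the three polynomials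
   x^(2p^s) - c.  These have Theta-fixed coefficients and, as Theta^(p^s) = id,
   are central in R_k[x;Theta]; their pairwise differences are nonzero elements
   of F_p, hence units, so they are pairwise comaximal and the Chinese remainder
   theorem splits every left ideal containing their product into its three
   components.  The Euclidean dual of a skew negacyclic code is again one: the
   negacyclic inner product satisfies <x c, x d> = Theta <c, d>, and
   Theta^N = id.  Irreducibility reduces modulo u to F, where a square root r of
   c with c^3 = -1 would satisfy r = r^(p^m) = r^7 = -r, which is impossible
   since |F| = p^m = 7 (mod 12). *)

From Pilot Require Import Defs.
From HB Require Import structures.
From mathcomp Require Import all_boot all_order all_algebra.
From mathcomp Require Import finfield ring zify.
Import GRing.Theory.
Local Open Scope ring_scope.

Section SkewPolynomials.
Context {R : comNzRingType} (th : {rmorphism R -> R}).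

Lemma iter_rmorph0 j : iter j th 0 = 0.
Proof. by elim: j => //= j ->; rewrite rmorph0. Qed.

Lemma iter_rmorphD j x y : iter j th (x + y) = iter j th x + iter j th y.
Proof. by elim: j => //= j ->; rewrite rmorphD. Qed.

Lemma iter_rmorphM j x y : iter j th (x * y) = iter j th x * iter j th y.
Proof. by elim: j => //= j ->; rewrite rmorphM. Qed.

Lemma iter_rmorph_sum j (I : finType) (F : I -> R) :
  iter j th (\sum_i F i) = \sum_i iter j th (F i).
Proof. by elim: j => //= j ->; rewrite rmorph_sum. Qed.

Local Notation "a ** b" := (skew_mul th a b) (at level 40, left associativity).

Lemma coef_skew_mul a b i :
  (a ** b)`_i = \sum_(j < i.+1) a`_j * iter j th b`_(i - j).
Proof.
rewrite coef_poly; case: ltnP => // le_ab_i; symmetry; apply: big1 => j _.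
have [lt_ja | le_aj] := ltnP j (size a); last by rewrite nth_default ?mul0r.
rewrite (nth_default 0 (s := b)) ?iter_rmorph0 ?mulr0 //.
have le_ji : (j <= i)%N by rewrite -ltnS.
by rewrite leq_subRL // (leq_trans _ le_ab_i) // leq_add2r ltnW.
Qed.

Lemma coef_skew_mul_rev a b i :
  (a ** b)`_i = \sum_(j < i.+1) a`_(i - j) * iter (i - j) th b`_j.
Proof.
rewrite coef_skew_mul (reindex_inj rev_ord_inj) /=.
by apply: eq_bigr => j _; rewrite subSS subKn // -ltnS.
Qed.

Lemma skew_mulA : associative (skew_mul th).
Proof.
move=> a b c; apply/polyP=> i; rewrite coef_skew_mul coef_skew_mul_rev.
pose t j l := a`_j * (iter j th b`_(i - j - l) * iter (i - l) th c`_l).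
transitivity (\sum_(j < i.+1) \sum_(l < i.+1 | (l <= i - j)%N) t j l).
  apply: eq_bigr => /= j _; rewrite coef_skew_mul_rev iter_rmorph_sum big_distrr.
  rewrite (big_ord_narrow_leq (leq_subr _ _)); apply: eq_bigr => l _ /=.
  rewrite /t iter_rmorphM -iterD; congr (_ * (_ * iter _ _ _)).
  by have := ltn_ord j; have := ltn_ord l; lia.
rewrite (exchange_big_dep predT) //=; apply: eq_bigr => l _.
transitivity (\sum_(j < i.+1 | (j <= i - l)%N) t j l).
  by apply: eq_bigl => j; have := ltn_ord j; have := ltn_ord l; lia.
rewrite (big_ord_narrow_leq (leq_subr _ _)) coef_skew_mul big_distrl /=.
by apply: eq_bigr => j _; rewrite /t -!subnDA addnC mulrA.
Qed.

Lemma skew_mulDl : left_distributive (skew_mul th) +%R.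
Proof.
move=> a b c; apply/polyP=> i; rewrite coefD !coef_skew_mul -big_split /=.
by apply: eq_bigr => j _; rewrite coefD mulrDl.
Qed.

Lemma skew_mulDr : right_distributive (skew_mul th) +%R.
Proof.
move=> a b c; apply/polyP=> i; rewrite coefD !coef_skew_mul -big_split /=.
by apply: eq_bigr => j _; rewrite coefD iter_rmorphD mulrDr.
Qed.

Lemma skew_mul0l a : 0 ** a = 0.
Proof. by apply/polyP=> i; rewrite coef_skew_mul coef0 big1 // => j _; rewrite coef0 mul0r. Qed.

Lemma skew_mul0r a : a ** 0 = 0.
Proof.
by apply/polyP=> i; rewrite coef_skew_mul coef0 big1 // => j _; rewrite coef0 iter_rmorph0 mulr0.
Qed.

Lemma skew_mulNl a b : (- a) ** b = - (a ** b).
Proof. by apply/eqP; rewrite -subr_eq0 opprK -skew_mulDl addNr skew_mul0l. Qed.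

Lemma skew_mulNr a b : a ** (- b) = - (a ** b).
Proof. by apply/eqP; rewrite -subr_eq0 opprK -skew_mulDr addNr skew_mul0r. Qed.

Lemma skew_mul_polyC c a : c%:P ** a = c *: a.
Proof.
apply/polyP=> i; rewrite coef_skew_mul big_ord_recl coefC subn0 coefZ big1 ?addr0 //.
by move=> j _; rewrite coefC mul0r.
Qed.

Lemma skew_mul1l a : 1 ** a = a.
Proof. by rewrite -polyC1 skew_mul_polyC scale1r. Qed.

Lemma skew_mulXn n a : 'X^n ** a = 'X^n * map_poly (iter n th) a.
Proof.
apply/polyP=> i; rewrite coef_skew_mul coefXnM.
have [lt_in | le_ni] := ltnP i n.
  apply: big1 => j _; rewrite coefXn.
  by case: eqP => [ej | _]; [have := ltn_ord j; lia | rewrite mul0r].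
rewrite (bigD1 (Ordinal (leq_ltn_trans le_ni (ltnSn i)))) //= big1 ?addr0.
  by rewrite coefXn eqxx mul1r coef_map_id0 ?iter_rmorph0.
by move=> j /negbTE nj; rewrite coefXn -val_eqE in nj *; rewrite nj mul0r.
Qed.

Definition fixedp (a : {poly R}) := forall i, th a`_i = a`_i.

Lemma iter_fixedp a : fixedp a -> forall j i, iter j th a`_i = a`_i.
Proof. by move=> fa; elim=> // j IH i /=; rewrite IH fa. Qed.

Lemma skew_mul_fixedp a b : fixedp b -> a ** b = a * b.
Proof.
move=> fb; apply/polyP=> i; rewrite coef_skew_mul coefM.
by apply: eq_bigr => j _; rewrite iter_fixedp.
Qed.

Lemma fixedpM a b : fixedp a -> fixedp b -> fixedp (a * b).
Proof.
move=> fa fb i; rewrite coefM rmorph_sum; apply: eq_bigr => j _.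
by rewrite rmorphM fa fb.
Qed.

Lemma fixedpD a b : fixedp a -> fixedp b -> fixedp (a + b).
Proof. by move=> fa fb i; rewrite coefD rmorphD fa fb. Qed.

Lemma fixedpC c : th c = c -> fixedp c%:P.
Proof. by move=> fc i; rewrite coefC; case: eqP; rewrite ?rmorph0. Qed.

Lemma fixedpXn n : fixedp 'X^n.
Proof. by move=> i; rewrite coefXn; case: eqP; rewrite ?rmorph1 ?rmorph0. Qed.

Lemma fixedp1 : fixedp 1.
Proof. by rewrite -(expr0 'X); exact: fixedpXn. Qed.

Lemma skew_exp_fixedp a n : fixedp a -> skew_exp th a n = a ^+ n.
Proof.
move=> fa; elim: n => // n IH.
have fan : fixedp (a ^+ n).
  by elim: n {IH} => [|n IH]; [exact: fixedp1 | rewrite exprS; apply: fixedpM].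
by rewrite /skew_exp /= -/(skew_exp th a n) IH skew_mul_fixedp // exprS.
Qed.

Definition centralp (a : {poly R}) := forall b, a ** b = b ** a.

Lemma centralpD a b : centralp a -> centralp b -> centralp (a + b).
Proof. by move=> ca cb c; rewrite skew_mulDl skew_mulDr ca cb. Qed.

Lemma centralpC c : th c = c -> centralp c%:P.
Proof.
move=> fc b; rewrite skew_mul_polyC skew_mul_fixedp; last exact: fixedpC.
by rewrite mulrC mul_polyC.
Qed.

Lemma centralpXn n : (forall x, iter n th x = x) -> centralp 'X^n.
Proof.
move=> thn b; rewrite skew_mulXn (skew_mul_fixedp _ _ (fixedpXn _)) mulrC.
by congr (_ * _); apply/polyP=> i; rewrite coef_map_id0 ?iter_rmorph0 // thn.
Qed.

Lemma fixedpXnsubC n c : th c = c -> fixedp ('X^n - c%:P).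
Proof.
move=> fc; rewrite -polyCN; apply: fixedpD; first exact: fixedpXn.
by apply: fixedpC; rewrite rmorphN fc.
Qed.

Lemma centralpXnsubC n c :
  (forall x, iter n th x = x) -> th c = c -> centralp ('X^n - c%:P).
Proof.
move=> thn fc; rewrite -polyCN; apply: centralpD; first exact: centralpXn.
by apply: centralpC; rewrite rmorphN fc.
Qed.

Lemma centralpM a b : centralp a -> centralp b -> fixedp b -> centralp (a * b).
Proof.
move=> ca cb fb c; rewrite -skew_mul_fixedp // -skew_mulA cb.
by rewrite skew_mulA ca -skew_mulA.
Qed.

End SkewPolynomials.

Section NegacyclicDual.
Context {R : comNzRingType} (th : {rmorphism R -> R}) (n : nat).
Local Notation N := n.+1.
Local Notation "a ** b" := (skew_mul th a b) (at level 40, left associativity).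

Definition negacoef (c : {poly R}) (i : nat) : R :=
  \sum_(t < size c) (-1) ^+ t * c`_(i + t * N).

Lemma negacoef_widen M (c : {poly R}) i : (size c <= M)%N ->
  negacoef c i = \sum_(t < M) (-1) ^+ t * c`_(i + t * N).
Proof.
move=> le_cM; rewrite /negacoef (big_ord_widen M (fun t => (-1) ^+ t * c`_(i + t * N))) //.
rewrite big_mkcond /=; apply: eq_bigr => t _; case: ltnP => // le_ct.
by rewrite nth_default ?mulr0 // (leq_trans le_ct) // (leq_trans _ (leq_addl _ _)) ?leq_pmulr.
Qed.

Lemma negacoefD (c d : {poly R}) i : negacoef (c + d) i = negacoef c i + negacoef d i.
Proof.
have le_cdM : (size (c + d)%R <= size c + size d)%N.
  by rewrite (leq_trans (size_polyD _ _)) // geq_max leq_addr leq_addl.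
rewrite !(@negacoef_widen (size c + size d)) ?leq_addr ?leq_addl //.
by rewrite -big_split; apply: eq_bigr => t _; rewrite coefD mulrDr.
Qed.

Lemma negacoefZ x (c : {poly R}) i : negacoef (x *: c) i = x * negacoef c i.
Proof.
rewrite !(@negacoef_widen (size c)) ?size_scale_leq // mulr_sumr.
by apply: eq_bigr => t _; rewrite coefZ mulrCA.
Qed.

Lemma negacoefN (c : {poly R}) i : negacoef (- c) i = - negacoef c i.
Proof. by rewrite -scaleN1r negacoefZ mulN1r. Qed.

Lemma negacoef0 i : negacoef 0 i = 0.
Proof. by rewrite /negacoef size_poly0 big_ord0. Qed.

Lemma negacoef_mulXn (c : {poly R}) i : (i < N)%N -> negacoef ('X^N * c) i = - negacoef c i.
Proof.
move=> lt_iN; rewrite (@negacoef_widen (N + size c).+1); last first.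
  by rewrite (leq_trans (size_polyMleq _ _)) // size_polyXn.
rewrite (@negacoef_widen (N + size c) c) ?leq_addl // big_ord_recl /= coefXnM.
rewrite mul0n addn0 lt_iN mulr0 add0r -sumrN; apply: eq_bigr => t _.
rewrite coefXnM /bump /= mulSn addnCA ltnNge leq_addr /= addKn.
by rewrite exprS mulN1r mulNr.
Qed.

Lemma size_skew_mulX (c : {poly R}) : (size ('X ** c) <= (size c).+1)%N.
Proof.
rewrite -[X in X ** c]expr1 skew_mulXn expr1 (leq_trans (size_polyMleq _ _)) //.
by rewrite size_polyX; exact: size_poly.
Qed.

Lemma negacoef_shiftS (c : {poly R}) j : negacoef ('X ** c) j.+1 = th (negacoef c j).
Proof.
rewrite (@negacoef_widen (size c).+1) ?size_skew_mulX // (@negacoef_widen (size c).+1) //.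
rewrite -[X in X ** c]expr1 skew_mulXn expr1.
rewrite rmorph_sum; apply: eq_bigr => t _.
by rewrite rmorphM rmorphXn rmorphN1 coefXM addSn coef_map.
Qed.

Lemma negacoef_shift0 (c : {poly R}) : negacoef ('X ** c) 0 = - th (negacoef c n).
Proof.
rewrite (@negacoef_widen (size c).+2) ?(leq_trans (size_skew_mulX c)) //.
rewrite (@negacoef_widen (size c).+1) // -[X in X ** c]expr1 skew_mulXn expr1.
rewrite big_ord_recl coefXM mulr0 add0r rmorph_sum -sumrN; apply: eq_bigr => t _.
rewrite rmorphM rmorphXn rmorphN1 /bump /= add0n mulSn coefXM addSn /= coef_map.
by rewrite exprS mulN1r mulNr.
Qed.

Lemma negafoldE (c : {poly R}) (i : 'I_N) : negafold c i = negacoef c i.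
Proof. by []. Qed.

Definition negadot (c d : {poly R}) : R := \sum_(i < N) negafold c i * negafold d i.

Lemma negadotDr (c d e : {poly R}) : negadot c (d + e) = negadot c d + negadot c e.
Proof. by rewrite -big_split; apply: eq_bigr => i _; rewrite !negafoldE negacoefD mulrDr. Qed.

Lemma negadotZr (c : {poly R}) x d : negadot c (x *: d) = x * negadot c d.
Proof. by rewrite mulr_sumr; apply: eq_bigr => i _; rewrite !negafoldE negacoefZ mulrCA. Qed.

Lemma negadot_shift (c d : {poly R}) : negadot ('X ** c) ('X ** d) = th (negadot c d).
Proof.
rewrite /negadot big_ord_recl big_ord_recr rmorphD addrC /=.
rewrite !negafoldE !negacoef_shift0 mulrNN rmorphM; congr (_ + _).
rewrite rmorph_sum; apply: eq_bigr => j _.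
rewrite /bump /= !negafoldE !negacoef_shiftS rmorphM; exact: erefl.
Qed.

Hypothesis thN : forall x, iter N th x = x.

Lemma euclid_dual_mulX (C : {poly R} -> Prop) d : left_ideal th C ->
  euclid_dual N C d -> euclid_dual N C ('X ** d).
Proof.
move=> [_ _ CM] Cd c Cc.
(* x c' = - x^N c, which is c modulo x^N + 1 *)
pose c' := - ('X^n ** c).
have Cc' : C c' by rewrite /c' -skew_mulNl; apply: CM.
have Xc' : 'X ** c' = - ('X^N * c).
  rewrite skew_mulNr skew_mulA (skew_mul_fixedp th _ _ (fixedpXn th _)) -exprS skew_mulXn.
  by congr (- (_ * _)); apply/polyP => i; rewrite coef_map_id0 ?iter_rmorph0 // thN.
have c'd : negadot c' d = 0 := Cd _ Cc'.
transitivity (negadot ('X ** c') ('X ** d)); last by rewrite negadot_shift c'd rmorph0.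
by apply: eq_bigr => i _; rewrite Xc' !negafoldE negacoefN negacoef_mulXn ?opprK.
Qed.

Lemma euclid_dual_left_ideal (C : {poly R} -> Prop) :
  left_ideal th C -> left_ideal th (euclid_dual N C).
Proof.
move=> CI; have dual0 : euclid_dual N C 0.
  by move=> c _; apply: big1 => i _; rewrite !negafoldE negacoef0 mulr0.
have dualD d e : euclid_dual N C d -> euclid_dual N C e -> euclid_dual N C (d + e).
  move=> Cd Ce c Cc; change (negadot c (d + e) = 0).
  by rewrite negadotDr [negadot c d](Cd c Cc) [negadot c e](Ce c Cc) addr0.
split=> // r; elim/poly_ind: r => [|r x IH] d Cd; first by rewrite skew_mul0l.
rewrite skew_mulDl skew_mul_polyC -[X in r * X]expr1.
rewrite -(skew_mul_fixedp th _ _ (fixedpXn th 1)) -skew_mulA expr1.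
apply: dualD; first exact/IH/euclid_dual_mulX.
move=> c Cc; change (negadot c (x *: d) = 0).
by rewrite negadotZr [negadot c d](Cd c Cc) mulr0.
Qed.

Lemma euclid_dual_mod (C : {poly R} -> Prop) r : euclid_dual N C (r ** ('X^N + 1)).
Proof.
move=> c _; rewrite skew_mul_fixedp; last exact/fixedpD/fixedp1/fixedpXn.
rewrite mulrDr mulr1 mulrC; apply: big1 => i _.
by rewrite !negafoldE negacoefD negacoef_mulXn // addNr mulr0.
Qed.

End NegacyclicDual.

Lemma skew_negacyclic_code_dual {R : comNzRingType} (th : {rmorphism R -> R}) {N C} :
  (0 < N)%N -> (forall x, iter N th x = x) ->
  skew_negacyclic_code th N C -> skew_negacyclic_code th N (euclid_dual N C).
Proof.
case: N => // n _ thN [CI _]; split; first exact: euclid_dual_left_ideal.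
exact: euclid_dual_mod.
Qed.

Section ChineseRemainder.
Context {R : comNzRingType} (th : {rmorphism R -> R}).
Local Notation "a ** b" := (skew_mul th a b) (at level 40, left associativity).

Definition comaximal (f g : {poly R}) := exists u v, u * f + v * g = 1.

Lemma qcomp_left_ideal f I : left_ideal th I -> left_ideal_quot th f (qcomp th f I).
Proof.
case=> I0 ID IM; split; last by move=> r; exists 0, r; rewrite add0r.
split.
- by exists 0, 0; rewrite skew_mul0l addr0.
- move=> _ _ [c1 [r1 [Ic1 ->]]] [c2 [r2 [Ic2 ->]]]; exists (c1 + c2), (r1 + r2).
  by rewrite skew_mulDl addrACA; split; first exact: ID.
- move=> r _ [c [s [Ic ->]]]; exists (r ** c), (r ** s).
  by rewrite skew_mulDr skew_mulA; split; first exact: IM.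
Qed.

Lemma qcomp_id f (I : {poly R} -> Prop) c : I c -> qcomp th f I c.
Proof. by exists c, 0; rewrite skew_mul0l addr0. Qed.

Lemma qcomp_sub f (I J : {poly R} -> Prop) :
  (forall c, I c -> J c) -> forall c, qcomp th f I c -> qcomp th f J c.
Proof. by move=> IJ c [d [r [Id ->]]]; exists d, r; split; first exact: IJ. Qed.

Lemma qcomp_mul_central I g h c :
  left_ideal th I -> (forall r, I (r ** (g * h))) ->
  centralp th g -> fixedp th h -> qcomp th h I c -> I (g ** c).
Proof.
case=> _ ID IM Igh cg fh [d [r [Id ->]]].
rewrite skew_mulDr; apply: ID; first exact: IM.
by rewrite skew_mulA cg -skew_mulA (skew_mul_fixedp th g h fh).
Qed.

Lemma qcomp_crt2 I g h c :
  left_ideal th I -> (forall r, I (r ** (g * h))) ->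
  centralp th g -> centralp th h -> fixedp th g -> fixedp th h -> comaximal g h ->
  qcomp th g I c -> qcomp th h I c -> I c.
Proof.
move=> II Igh cg ch fg fh [u [v uv1]] Igc Ihc; have [_ ID IM] := II.
rewrite -(skew_mul1l th c) -uv1 skew_mulDl -(skew_mul_fixedp th u _ fg).
rewrite -(skew_mul_fixedp th v _ fh) -!skew_mulA; apply: ID; apply: IM.
  exact: qcomp_mul_central Ihc.
by apply: qcomp_mul_central Igc => // r; rewrite mulrC.
Qed.

Lemma comaximal_mull f1 f2 f3 :
  comaximal f1 f3 -> comaximal f2 f3 -> comaximal (f1 * f2) f3.
Proof.
move=> [u1 [v1 uv1]] [u2 [v2 uv2]].
exists (u1 * u2), (u1 * f1 * v2 + v1 * u2 * f2 + v1 * v2 * f3).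
rewrite -[1](mulr1 1) -{1}uv1 -uv2; ring.
Qed.

Lemma qcomp_crt3 I f1 f2 f3 :
  left_ideal th I -> (forall r, I (r ** (f1 * f2 * f3))) ->
  centralp th f1 -> centralp th f2 -> centralp th f3 ->
  fixedp th f1 -> fixedp th f2 -> fixedp th f3 ->
  comaximal f1 f2 -> comaximal f1 f3 -> comaximal f2 f3 ->
  forall c, I c <-> [/\ qcomp th f1 I c, qcomp th f2 I c & qcomp th f3 I c].
Proof.
move=> II I123 cf1 cf2 cf3 ff1 ff2 ff3 co12 co13 co23 c.
split=> [Ic | [I1c I2c I3c]]; first by split; apply: qcomp_id.
have [J12I J12mod] := qcomp_left_ideal (f1 * f2) I II.
have J12c : qcomp th (f1 * f2) I c.
  apply: (qcomp_crt2 _ f1 f2 c J12I J12mod) => //.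
    by apply: qcomp_sub I1c => d; apply: qcomp_id.
  by apply: qcomp_sub I2c => d; apply: qcomp_id.
apply: (qcomp_crt2 _ (f1 * f2) f3 c II I123) J12c I3c => //.
- exact: centralpM.
- exact: fixedpM.
- exact: comaximal_mull.
Qed.

End ChineseRemainder.

Theorem skew_negacyclic_code_crt {R : comNzRingType} (th : {rmorphism R -> R})
    (N : nat) (f1 f2 f3 : {poly R}) :
  (0 < N)%N -> (forall x, iter N th x = x) ->
  centralp th f1 -> centralp th f2 -> centralp th f3 ->
  fixedp th f1 -> fixedp th f2 -> fixedp th f3 ->
  comaximal f1 f2 -> comaximal f1 f3 -> comaximal f2 f3 ->
  f1 * f2 * f3 = 'X^N + 1 ->
  forall C : {poly R} -> Prop, skew_negacyclic_code th N C ->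
    let Cp := euclid_dual N C in
    let C1 := qcomp th f1 C in
    let C2 := qcomp th f2 C in
    let C3 := qcomp th f3 C in
    let C1p := qcomp th f1 Cp in
    let C2p := qcomp th f3 Cp in
    let C3p := qcomp th f2 Cp in
    [/\ left_ideal_quot th f1 C1 /\ left_ideal_quot th f2 C2 /\
          left_ideal_quot th f3 C3,
        same_set C (fun c => C1 c /\ C2 c /\ C3 c),
        left_ideal_quot th f1 C1p /\ left_ideal_quot th f3 C2p /\
          left_ideal_quot th f2 C3p,
        same_set Cp (fun c => C1p c /\ C2p c /\ C3p c) &
        (same_set C Cp <->
           [/\ same_set C1 C1p, same_set C2 C3p & same_set C3 C2p])].
Proof.
move=> N_gt0 thN cf1 cf2 cf3 ff1 ff2 ff3 co12 co13 co23 f123 C codeC Cp.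
have codeCp : skew_negacyclic_code th N Cp := skew_negacyclic_code_dual th N_gt0 thN codeC.
have [[CI _] [CpI _]] := (codeC, codeCp).
have Cmod I : skew_negacyclic_code th N I -> forall r, I (skew_mul th r (f1 * f2 * f3)).
  by rewrite f123 => -[].
have crtC := qcomp_crt3 th C f1 f2 f3 CI (Cmod _ codeC) cf1 cf2 cf3 ff1 ff2 ff3 co12 co13 co23.
have crtCp := qcomp_crt3 th Cp f1 f2 f3 CpI (Cmod _ codeCp)
  cf1 cf2 cf3 ff1 ff2 ff3 co12 co13 co23.
move=> C1 C2 C3 C1p C2p C3p; split.
- by split; [|split]; apply: qcomp_left_ideal.
- by move=> c; rewrite crtC; split=> [[]|[? []]].
- by split; [|split]; apply: qcomp_left_ideal.
- by move=> c; rewrite crtCp; split=> [[]|[? []]].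
split=> [CCp | [C1p1 C2p3 C3p2] c].
  by split=> c; split; apply: qcomp_sub => d /CCp.
by rewrite crtC crtCp; split=> -[/C1p1 ? /C2p3 ? /C3p2 ?].
Qed.

Section PrimeFieldImage.
Context {p : nat} {S : nzRingType}.
Hypotheses (p_pr : prime p) (pS : p \in [pchar S]).

Lemma Fp_to_natr n : Fp_to (n%:R : 'F_p) = n%:R :> S.
Proof. by rewrite /Fp_to val_Fp_nat // (GRing.natr_mod_pchar pS). Qed.

Lemma Fp_toD (x y : 'F_p) : Fp_to (x + y) = Fp_to x + Fp_to y :> S.
Proof. by rewrite -[x]natr_Zp -[y]natr_Zp -natrD !Fp_to_natr natrD. Qed.

Lemma Fp_to_is_zmod_morphism : zmod_morphism (@Fp_to p S).
Proof. by move=> x y; rewrite -[in RHS](subrK y x) [in RHS]Fp_toD addrK. Qed.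

Lemma Fp_to_is_monoid_morphism : monoid_morphism (@Fp_to p S).
Proof.
split=> [|x y]; first by rewrite -[1]/(1%:R) Fp_to_natr.
by rewrite -[x]natr_Zp -[y]natr_Zp -natrM !Fp_to_natr natrM.
Qed.

Definition Fp_rmorphism : {rmorphism 'F_p -> S} :=
  HB.pack (@Fp_to p S)
    (GRing.isZmodMorphism.Build _ _ _ Fp_to_is_zmod_morphism)
    (GRing.isMonoidMorphism.Build _ _ _ Fp_to_is_monoid_morphism).

End PrimeFieldImage.

Lemma Fp_frobeniusX (p s : nat) (x : 'F_p) : prime p -> x ^+ (p ^ s) = x.
Proof.
move=> p_pr; elim: s => [|s IH]; first by rewrite expr1.
by rewrite expnSr exprM IH -[in X in _ ^+ X](card_Fp p_pr) expf_card.
Qed.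

Section PrimitiveSixthRoot.
Context {F : fieldType} {z : F}.
Hypothesis z_prim : 6.-primitive_root z.

Lemma prim6_expr3 : z ^+ 3 = -1.
Proof.
have : (z ^+ 3) ^+ 2 == 1 by rewrite -exprM prim_expr_order.
rewrite sqrf_eq1 => /orP[/eqP z3 | /eqP //].
by move: (prim_order_dvd z_prim 3); rewrite z3 eqxx.
Qed.

Lemma prim6_sqr_neq1 : z ^+ 2 != 1.
Proof. by rewrite -(prim_order_dvd z_prim). Qed.

Lemma prim6_neq0 : z != 0.
Proof. by rewrite (prim_root_eq0 z_prim). Qed.

Lemma prim6_neqN1 : z != -1.
Proof. by apply: contraNneq prim6_sqr_neq1 => ->; rewrite sqrrN expr1n. Qed.

Lemma prim6_addV : z + z^-1 = 1.
Proof.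
have z1_neq0 : z + 1 != 0 by rewrite addr_eq0 prim6_neqN1.
have : (z + 1) * (z ^+ 2 - z + 1) = z ^+ 3 + 1 by ring.
rewrite prim6_expr3 addNr => /eqP; rewrite mulf_eq0 (negbTE z1_neq0) => /eqP q0.
apply: (mulfI prim6_neq0); rewrite mulrDr mulfV ?prim6_neq0 // mulr1.
by apply/eqP; rewrite -subr_eq0 -q0; apply/eqP; ring.
Qed.

Lemma prim6_invr_neqN1 : z^-1 != -1.
Proof. by rewrite -[-1]invrN1 (inj_eq (@invr_inj _)) prim6_neqN1. Qed.

Lemma prim6_invr_neq : z^-1 != z.
Proof.
apply: contraNneq prim6_sqr_neq1 => zV.
by rewrite expr2 -{1}zV mulVf ?prim6_neq0.
Qed.

End PrimitiveSixthRoot.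

Section TruncatedPolynomials.
Context {A : comNzRingType} {k : nat}.
Hypothesis k_gt0 : (0 < k)%N.

Lemma mk_monic_Xk : mk_monic ('X^k : {poly A}) = 'X^k.
Proof. by rewrite mk_monic_Xn prednK. Qed.

Lemma coef0_rmodpXk (q : {poly A}) : (Pdiv.Ring.rmodp q (mk_monic 'X^k))`_0 = q`_0.
Proof.
rewrite mk_monic_Xk {2}(Pdiv.RingMonic.rdivp_eq (monicXn _ k) q).
by rewrite coefD coefMXn k_gt0 add0r.
Qed.

Definition Rk_coef0 (x : Rk A k) : A := (x : {poly A})`_0.

Lemma Rk_coef0_is_zmod_morphism : zmod_morphism Rk_coef0.
Proof. by move=> x y; rewrite /Rk_coef0 /= coefB. Qed.

Lemma Rk_coef0_is_monoid_morphism : monoid_morphism Rk_coef0.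
Proof.
split=> [|x y]; first by rewrite /Rk_coef0 /= coefC.
by rewrite /Rk_coef0 poly_of_qpolyM coef0_rmodpXk coefM big_ord1.
Qed.

Definition Rk_reduction : {rmorphism Rk A k -> A} :=
  HB.pack Rk_coef0
    (GRing.isZmodMorphism.Build _ _ _ Rk_coef0_is_zmod_morphism)
    (GRing.isMonoidMorphism.Build _ _ _ Rk_coef0_is_monoid_morphism).

Lemma Rk_qX_expk : ('qX : Rk A k) ^+ k = 0.
Proof.
apply: val_inj; rewrite /= /qpolyX -rmorphXn /= mk_monic_Xk.
exact: Pdiv.RingMonic.rmodpp (monicXn _ k).
Qed.

Definition Rk_divX (x : Rk A k) : Rk A k := in_qpoly _ (drop_poly 1 (x : {poly A})).

Lemma Rk_reduction_eq0 (x : Rk A k) : Rk_reduction x = 0 -> x = 'qX * Rk_divX x.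
Proof.
move=> x0; rewrite /Rk_divX /qpolyX -rmorphM; apply: val_inj => /=.
have -> : 'X * drop_poly 1 (x : {poly A}) = x.
  rewrite -[RHS](poly_take_drop 1) expr1 mulrC -[LHS]add0r; congr (_ + _).
  by apply/polyP => -[|i]; rewrite coef_take_poly ?coef0 //; exact: x0.
by rewrite Pdiv.Ring.rmodp_small // size_mk_monic.
Qed.

End TruncatedPolynomials.

Lemma unitr_addr_nilpotent {S : comNzRingType} {u z w : S} {j : nat} :
  u * w = 1 -> z ^+ j = 0 -> exists w', (u + z) * w' = 1.
Proof.
move=> uw1 zj0; pose t := - (w * z).
have tj0 : t ^+ j = 0 by rewrite exprNn exprMn zj0 !mulr0.
have geom : (1 - t) * \sum_(i < j) t ^+ i = 1.
  by rewrite -opprB mulNr -subrX1 tj0 sub0r opprK.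
exists (w * \sum_(i < j) t ^+ i); rewrite -{}geom /t.
by rewrite mulrA; congr (_ * _); rewrite opprK mulrDl uw1 mulrC.
Qed.

Section TruncatedUnits.
Context {F : fieldType} {k : nat}.
Hypothesis k_gt0 : (0 < k)%N.
Local Notation red := (Rk_reduction k_gt0).

Lemma Rk_nilpotent (x : Rk F k) : red x = 0 -> x ^+ k = 0.
Proof. by move=> /Rk_reduction_eq0 ->; rewrite exprMn (Rk_qX_expk k_gt0) mul0r. Qed.

Lemma Rk_unit_lift (x : Rk F k) : red x != 0 -> exists y, x * y = 1.
Proof.
move=> x_nz; pose d := red x.
have d_lift : red (qpolyC _ d) = d by rewrite /= /Rk_coef0 qpolyCE coefC.
have d1 : qpolyC ('X^k) d * qpolyC _ d^-1 = 1 by rewrite -qpolyCM mulfV.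
have nil : (x - qpolyC _ d) ^+ k = 0.
  by apply: Rk_nilpotent; rewrite rmorphB d_lift subrr.
have [y xy1] := unitr_addr_nilpotent d1 nil.
by exists y; rewrite addrC subrK in xy1.
Qed.

Lemma poly_unit_lift (a : {poly Rk F k}) :
  size (map_poly red a) = 1%N -> Defs.poly_unit a.
Proof.
move=> a1; have a0_nz : red a`_0 != 0.
  have : lead_coef (map_poly red a) != 0 by rewrite lead_coef_eq0 -size_poly_eq0 a1.
  by rewrite lead_coefE a1 coef_map.
have [w0 a0w0] := Rk_unit_lift _ a0_nz.
pose z := a - (a`_0)%:P.
have z_red i : red z`_i = 0.
  rewrite /z coefB coefC rmorphB -coef_map (size1_polyC (eq_leq a1)) coefC coef_map.
  by case: (i == 0%N); rewrite ?rmorph0 subrr.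
have zE : z = 'qX *: \poly_(i < size z) Rk_divX z`_i.
  apply/polyP => i; rewrite coefZ coef_poly; case: ltnP => [_ | le_zi].
    exact/Rk_reduction_eq0/z_red.
  by rewrite mulr0 nth_default.
have zk0 : z ^+ k = 0 by rewrite zE exprZn (Rk_qX_expk k_gt0) scale0r.
have a0w0P : (a`_0)%:P * w0%:P = 1 by rewrite -polyCM a0w0.
have [w aw1] := unitr_addr_nilpotent a0w0P zk0.
by exists w; rewrite /z addrC subrK in aw1.
Qed.

Lemma Rk_quadratic_irreducible (c : Rk F k) :
  (forall r : F, r ^+ 2 != red c) -> poly_irreducible ('X^2 - c%:P).
Proof.
move=> nonsq; pose Q : {poly F} := 'X^2 - (red c)%:P.
have redQ : map_poly red ('X^2 - c%:P) = Q.
  by rewrite rmorphB; congr (_ - _); [exact: map_polyXn | exact: map_polyC].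
have sizeQ : size Q = 3%N by rewrite size_XnsubC.
have Q_nz : Q != 0 by rewrite -size_poly_gt0 sizeQ.
have redM a b : map_poly red (a * b) = map_poly red a * map_poly red b := rmorphM _ a b.
have red_factor a b : 'X^2 - c%:P = a * b ->
    [/\ Q = map_poly red a * map_poly red b, map_poly red a != 0 & map_poly red b != 0].
  move=> qab; have Qab : Q = map_poly red a * map_poly red b.
    by rewrite -redQ qab redM.
  by split=> //; apply: contraNneq Q_nz; rewrite Qab => ->; rewrite ?mul0r ?mulr0.
split.
- by apply: contraNneq Q_nz => q0; rewrite -redQ q0 rmorph0.
- move=> [b qb1]; have Qb : Q * map_poly red b = 1.
    by rewrite -redQ -redM qb1 rmorph1.
  have b_nz : map_poly red b != 0.
    by apply: contra_eq_neq Qb => ->; rewrite mulr0 eq_sym oner_neq0.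
  have := size_mul Q_nz b_nz; rewrite Qb sizeQ size_poly1.
  by move: b_nz; rewrite -size_poly_gt0; move: (size _) => n; lia.
move=> a b /red_factor[Qab a_nz b_nz].
have sz := size_mul a_nz b_nz; rewrite -Qab sizeQ in sz.
have [a1 | a_ne1] := eqVneq (size (map_poly red a)) 1%N.
  by left; apply: poly_unit_lift.
have [b1 | b_ne1] := eqVneq (size (map_poly red b)) 1%N.
  by right; apply: poly_unit_lift.
have a2 : size (map_poly red a) = 2%N.
  move: sz a_nz b_nz a_ne1 b_ne1; rewrite -!size_poly_gt0.
  move: (size (map_poly red a)) (size (map_poly red b)) => m n; lia.
have [r ar] := poly2_root a2.
have : root Q r by rewrite Qab rootM ar.
by rewrite /root !hornerE subr_eq0 (negbTE (nonsq r)).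
Qed.

End TruncatedUnits.

Lemma iter_muln_id {T : Type} (f : T -> T) n j :
  (forall x, iter n f x = x) -> forall x, iter (j * n) f x = x.
Proof. by move=> fn; elim: j => // j IH x; rewrite mulSn iterD IH fn. Qed.

Lemma skew_exp_quadratic {R : comNzRingType} (th : {rmorphism R -> R}) (p s : nat) (c : R) :
  prime p -> p \in [pchar R] -> (forall x, iter (p ^ s) th x = x) ->
  th c = c -> c ^+ (p ^ s) = c ->
  let f := skew_exp th ('X^2 - c%:P) (p ^ s) in
  [/\ f = 'X^(2 * p ^ s) - c%:P, fixedp th f & centralp th f].
Proof.
move=> p_pr pR thps thc c_frob f.
have pR_ps : [pchar R].-nat (p ^ s)%N by rewrite pnatX (pnatE _ p_pr) pR.
have pRX_ps : [pchar {poly R}].-nat (p ^ s)%N by rewrite pnatX (pnatE _ p_pr) pchar_poly pR.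
have fE : f = 'X^(2 * p ^ s) - c%:P.
  rewrite /f skew_exp_fixedp; last exact: fixedpXnsubC.
  rewrite exprDn_pchar // -exprM -polyCN -polyC_exp.
  by rewrite exprNn_pchar // c_frob.
rewrite fE; split=> //; first exact: fixedpXnsubC.
exact/centralpXnsubC/thc/iter_muln_id.
Qed.

Lemma comaximal_XsubC {R : comUnitRingType} (Z : {poly R}) c d :
  d - c \is a GRing.unit -> comaximal (Z - c%:P) (Z - d%:P).
Proof.
move=> dc_unit; exists ((d - c)^-1)%:P, (- (d - c)^-1)%:P.
rewrite polyCN mulNr -mulrBr.
have -> : (Z - c%:P) - (Z - d%:P) = (d - c)%:P by rewrite polyCB; ring.
by rewrite -polyCM mulVr.
Qed.

Lemma mul_XsubC_cube_add1 {R : comNzRingType} (n : nat) (a b : R) :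
  a + b = 1 -> a * b = 1 ->
  ('X^n - (-1)%:P) * ('X^n - a%:P) * ('X^n - b%:P) = 'X^(3 * n) + 1 :> {poly R}.
Proof.
move=> ab1 ab1'; rewrite mulnC exprM polyCN polyC1 opprK -mulrA.
have -> : ('X^n - a%:P) * ('X^n - b%:P) = 'X^n ^+ 2 - (a + b)%:P * 'X^n + (a * b)%:P.
  by rewrite polyCD polyCM; ring.
by rewrite ab1 ab1' polyC1; ring.
Qed.

Lemma expn_odd_modn (p m d : nat) : p ^ 2 = 1 %[mod d] -> odd m -> p ^ m = p %[mod d].
Proof.
move=> p2 m_odd; rewrite -(odd_double_half m) m_odd -muln2 mulnC expnD expnM.
by rewrite expn1 -modnMmr -modnXm p2 modnXm exp1n modnMmr muln1.
Qed.

Lemma finField_sqr_neq_cube_root_m1 {F : finFieldType} (p m : nat) :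
  prime p -> #|F| = (p ^ m)%N -> (#|F| %% 12 = 7)%N ->
  forall c r : F, c ^+ 3 = -1 -> r ^+ 2 != c.
Proof.
move=> p_pr cardF F7 c r c3; apply/eqP => r2c.
have p_odd : odd p.
  have : odd #|F| by rewrite (divn_eq #|F| 12) F7 oddD oddM andbF.
  by rewrite cardF oddX; case/orP=> // /eqP m0; move: F7; rewrite cardF m0.
have two_nz : (2%:R : F) != 0.
  rewrite -(dvdn_pcharf (card_finPcharP cardF p_pr)) (dvdn_prime2 p_pr) //.
  by apply: contraTneq p_odd => ->.
(* r^|F| = r and |F| = 7 mod 12, while r^12 = c^6 = 1 and r^7 = r c^3 = -r *)
have r12 : r ^+ 12 = 1 by rewrite (exprM r 2 6) r2c (exprM c 3 2) c3 sqrrN expr1n.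
have r7 : r ^+ 7 = - r by rewrite exprS (exprM r 2 3) r2c c3 mulrN1.
have := expf_card r; rewrite (divn_eq #|F| 12) F7 exprD mulnC exprM r12 expr1n mul1r r7.
move/eqP; rewrite eq_sym -addr_eq0 -mulr2n -mulr_natr mulf_eq0 (negbTE two_nz) orbF => /eqP r0.
by move: c3; rewrite -r2c r0 expr0n /= expr0n /= => /eqP; rewrite eq_sym oppr_eq0 oner_eq0.
Qed.

Lemma Rk_XsubFp_irreducible {F : finFieldType} {k : nat} (p m : nat) :
  (0 < k)%N -> prime p -> #|F| = (p ^ m)%N -> (#|F| %% 12 = 7)%N ->
  forall x : 'F_p, x ^+ 3 = -1 -> poly_irreducible ('X^2 - (Fp_to x)%:P : {poly Rk F k}).
Proof.
move=> k_gt0 p_pr cardF F7 x x3; apply: (Rk_quadratic_irreducible k_gt0) => r.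
apply: (finField_sqr_neq_cube_root_m1 _ _ p_pr cardF F7).
have pF := card_finPcharP cardF p_pr.
have pR : p \in [pchar Rk F k] by rewrite pchar_qpoly.
rewrite -[Fp_to x]/(Fp_rmorphism p_pr pR x) -!rmorphXn x3.
by rewrite !rmorphN1.
Qed.

Section SkewNegacyclicFactors.
Context {R : comUnitRingType} (th : {rmorphism R -> R}) {p : nat} (s : nat).
Hypotheses (p_pr : prime p) (pR : p \in [pchar R]).
Hypothesis th_ps : forall x, iter (p ^ s) th x = x.
Local Notation fp := (Fp_rmorphism p_pr pR).

Lemma skew_exp_XsubFp (x : 'F_p) :
  let f := skew_exp th ('X^2 - (Fp_to x)%:P) (p ^ s) in
  [/\ f = 'X^(2 * p ^ s) - (Fp_to x)%:P, fixedp th f & centralp th f].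
Proof.
apply: skew_exp_quadratic => //; first exact: rmorph_nat.
by rewrite -[Fp_to x]/(fp x) -rmorphXn Fp_frobeniusX.
Qed.

Lemma XsubFp_N1 : 'X^2 - (Fp_to (-1 : 'F_p))%:P = 'X^2 + 1 :> {poly R}.
Proof. by rewrite -[Fp_to _]/(fp (-1)) rmorphN1 polyCN opprK polyC1. Qed.

Lemma comaximal_XsubFp n (x y : 'F_p) :
  x != y -> comaximal ('X^n - (Fp_to x)%:P) ('X^n - (Fp_to y)%:P :> {poly R}).
Proof.
move=> xy; apply: comaximal_XsubC.
by rewrite -[Fp_to y]/(fp y) -[Fp_to x]/(fp x) -rmorphB rmorph_unit // unitfE subr_eq0 eq_sym.
Qed.

Lemma skew_negacyclic_6ps_factors (z : 'F_p) : 6.-primitive_root z ->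
  let f1 := skew_exp th ('X^2 + 1) (p ^ s) in
  let f2 := skew_exp th ('X^2 - (Fp_to z)%:P) (p ^ s) in
  let f3 := skew_exp th ('X^2 - (Fp_to z^-1)%:P) (p ^ s) in
  [/\ f1 * f2 * f3 = 'X^(6 * p ^ s) + 1,
      [/\ fixedp th f1, fixedp th f2 & fixedp th f3],
      [/\ centralp th f1, centralp th f2 & centralp th f3] &
      [/\ comaximal f1 f2, comaximal f1 f3 & comaximal f2 f3]].
Proof.
move=> z_prim f1 f2 f3.
have [f1E ff1 cf1] : [/\ f1 = 'X^(2 * p ^ s) - (Fp_to (-1 : 'F_p))%:P,
    fixedp th f1 & centralp th f1] by rewrite /f1 -XsubFp_N1; apply: skew_exp_XsubFp.
have [f2E ff2 cf2] : [/\ f2 = 'X^(2 * p ^ s) - (Fp_to z)%:P,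
    fixedp th f2 & centralp th f2] := skew_exp_XsubFp z.
have [f3E ff3 cf3] : [/\ f3 = 'X^(2 * p ^ s) - (Fp_to z^-1)%:P,
    fixedp th f3 & centralp th f3] := skew_exp_XsubFp z^-1.
split=> //; last first.
  rewrite f1E f2E f3E; split; apply: comaximal_XsubFp.
  - by rewrite eq_sym prim6_neqN1.
  - by rewrite eq_sym prim6_invr_neqN1.
  - by rewrite eq_sym prim6_invr_neq.
have -> : (6 * p ^ s = 3 * (2 * p ^ s))%N by rewrite mulnA.
rewrite f1E f2E f3E -[Fp_to (-1 : 'F_p)]/(fp (-1)) rmorphN1.
apply: mul_XsubC_cube_add1; rewrite -[Fp_to z]/(fp z) -[Fp_to z^-1]/(fp z^-1).
  by rewrite -rmorphD prim6_addV // rmorph1.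
by rewrite -rmorphM mulfV ?prim6_neq0 // rmorph1.
Qed.

End SkewNegacyclicFactors.

Theorem mainTheorem14 (p m s k : nat) (F : finFieldType)
    (Theta : {rmorphism Rk F k -> Rk F k}) (xi : 'F_p) :
  prime p -> (p %% 12 = 7)%N -> odd m -> #|F| = (p ^ m)%N -> (0 < k)%N ->
  bijective Theta -> (forall r, iter (p ^ s) Theta r = r) ->
  (p.-1).-primitive_root xi ->
  let alpha : 'F_p := xi ^+ ((p - 1) %/ 6) in
  let a : Rk F k := Fp_to alpha in
  let ai : Rk F k := Fp_to alpha^-1 in
  let N := (6 * p ^ s)%N in
  let f1 := skew_exp Theta ('X^2 + 1) (p ^ s) in
  let f2 := skew_exp Theta ('X^2 - a%:P) (p ^ s) in
  let f3 := skew_exp Theta ('X^2 - ai%:P) (p ^ s) in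
  [/\ poly_irreducible ('X^2 + 1 : {poly Rk F k}),
      poly_irreducible ('X^2 - a%:P),
      poly_irreducible ('X^2 - ai%:P),
      'X^N + 1 = skew_mul Theta (skew_mul Theta f1 f2) f3 &
      forall C : {poly Rk F k} -> Prop, skew_negacyclic_code Theta N C ->
        let Cp := euclid_dual N C in
        let C1 := qcomp Theta f1 C in
        let C2 := qcomp Theta f2 C in
        let C3 := qcomp Theta f3 C in
        let C1p := qcomp Theta f1 Cp in
        let C2p := qcomp Theta f3 Cp in
        let C3p := qcomp Theta f2 Cp in
        [/\ left_ideal_quot Theta f1 C1 /\ left_ideal_quot Theta f2 C2 /\
              left_ideal_quot Theta f3 C3,
            same_set C (fun c => C1 c /\ C2 c /\ C3 c),
            left_ideal_quot Theta f1 C1p /\ left_ideal_quot Theta f3 C2p /\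
              left_ideal_quot Theta f2 C3p,
            same_set Cp (fun c => C1p c /\ C2p c /\ C3p c) &
            (same_set C Cp <->
               [/\ same_set C1 C1p, same_set C2 C3p & same_set C3 C2p])]].
Proof.
move=> p_pr p12 m_odd cardF k_gt0 _ th_ps xi_prim alpha a ai N f1 f2 f3.
have pR : p \in [pchar Rk F k] by rewrite pchar_qpoly (card_finPcharP cardF p_pr).
have alpha_prim : 6.-primitive_root alpha.
  by rewrite /alpha subn1; apply: (dvdn_prim_root xi_prim); lia.
have [f123 [ff1 ff2 ff3] [cf1 cf2 cf3] [co12 co13 co23]] :=
  skew_negacyclic_6ps_factors Theta s p_pr pR th_ps _ alpha_prim.
have F7 : (#|F| %% 12 = 7)%N by rewrite cardF expn_odd_modn // -modnXm p12.
have irr := Rk_XsubFp_irreducible _ _ k_gt0 p_pr cardF F7.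
have alpha3 := prim6_expr3 alpha_prim.
split.
- by rewrite -(XsubFp_N1 p_pr pR); apply: irr; rewrite -signr_odd expr1.
- exact: irr.
- by apply: irr; rewrite exprVn alpha3 invrN1.
- by rewrite (skew_mul_fixedp Theta f1 f2 ff2) (skew_mul_fixedp Theta _ f3 ff3) f123.
have N_gt0 : (0 < N)%N by rewrite /N muln_gt0 expn_gt0 (prime_gt0 p_pr).
exact: (skew_negacyclic_code_crt Theta N f1 f2 f3 N_gt0 (iter_muln_id Theta _ 6 th_ps)
  cf1 cf2 cf3 ff1 ff2 ff3 co12 co13 co23 f123).
Qed.
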